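(* The objects of the Quillen category $\mathcal{A}_p(S)$ (i.e. the elementary abelian subgroups of $S$) are exactly the elements of the disjoint union of the sets $\mathcal{C}(L)$ for $L \in \mathcal{L}$.
   Context: Conventions: for a group $G$ acting on the right on an additive abelian group $M$, $Z^n(G,M)$, $B^n(G,M)$ are the normalised cocycles and coboundaries; for $\tau \in Z^2(G,M)$, $\mathrm{Ext}(\tau)$ is $G\times M$ with $(g,m)(h,n) = (gh, m^h+n+\tau(g,h))$. Setting: $p$ prime, $S$ an infinite pro-$p$-group of finite coclass, $T = \gamma_\ell(S)$ for $\ell$ large enough so that $T \cong \mathbb{Z}_p^d$, $P = S/T$ is a finite $p$-group and the series $T_0 = T$, $T_{i+1}=[T_i,S]$ has all indices $p$. $T$ is written additively as a $P$-module by conjugation, and $S$ is identified with $\mathrm{Ext}(\rho)$ for some $\rho \in Z^2(P,T)$, with $\epsilon: S \to P$, $(w,t)\mapsto w$, and $T$ identified with $\{(1,t)\}$. For $L \leq P$ let $\overline{L} = \epsilon^{-1}(L)$. Let $\mathcal{L}$ be the set of elementary abelian subgroups $L \leq P$ such that the restriction $\rho_L$ lies in $B^2(L,T)$ (equivalently $\overline{L}$ splits over $T$). For $L \in \mathcal{L}$ fix a complement $C_L = \{c_L(l) \mid l \in L\}$ to $T$ in $\overline{L}$, with $c_L(l) = (l, t_L(l))$. For $\delta \in Z^1(L,T)$ put $C_L(\delta) = \{(l, t_L(l)+\delta(l)) \mid l \in L\}$ and $\mathcal{C}(L) = \{ C_L(\delta) \mid \delta \in Z^1(L,T)\}$. The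 Quillen category $\mathcal{A}_p(S)$ has as objects the elementary abelian subgroups of $S$ and as morphisms the injective homomorphisms induced by conjugation in $S$. *)

From mathcomp Require Import all_boot all_order all_algebra all_fingroup all_solvable.
Set Implicit Arguments. Unset Strict Implicit. Unset Printing Implicit Defensive.
Import GRing.Theory.

(* Setting: P = S/T a finite p-group (a group in a finGroupType gT),
   T an additive abelian group (zmodType) with a right P-action
   [act t g] = t^g, rho a normalised 2-cocycle, S = Ext(rho) realised
   on pairs (g, t) with g in P. Subsets of S are predicates on gT * T. *)

Section Ext.
Variables (gT : finGroupType) (T : zmodType).
Variable act : T -> gT -> T.
Variable rho : gT -> gT -> T.

Local Open Scope ring_scope.

Definition is_right_module (P : {set gT}) : Prop :=
  [/\ forall t, act t 1%g = t,
      forall t g h, g \in P -> h \in P -> act t (g * h)%g = act (act t g) h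
    & forall s t g, g \in P -> act (s + t) g = act s g + act t g].

(* normalised 2-cocycles for the multiplication
   (g,m)(h,n) = (gh, m^h + n + rho(g,h)) *)
Definition is_Z2 (P : {set gT}) : Prop :=
  [/\ forall g, g \in P -> rho 1%g g = 0,
      forall g, g \in P -> rho g 1%g = 0
    & forall g h k, g \in P -> h \in P -> k \in P ->
        act (rho g h) k + rho (g * h)%g k = rho h k + rho g (h * k)%g].

Definition in_B2 (L : {set gT}) : Prop :=
  exists f : gT -> T, f 1%g = 0 /\
    forall l m, l \in L -> m \in L -> rho l m = f (l * m)%g - act (f l) m - f m.

Definition is_Z1 (L : {set gT}) (d : gT -> T) : Prop :=
  d 1%g = 0 /\ forall l m, l \in L -> m \in L -> d (l * m)%g = act (d l) m + d m.

Definition ext_one : gT * T := (1%g, 0).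
Definition ext_mul (x y : gT * T) : gT * T :=
  ((x.1 * y.1)%g, act x.2 y.1 + y.2 + rho x.1 y.1).
Definition ext_inv (x : gT * T) : gT * T :=
  ((x.1)^-1%g, - act x.2 (x.1)^-1%g - rho x.1 (x.1)^-1%g).
Definition ext_exp (x : gT * T) (n : nat) : gT * T := iter n (ext_mul x) ext_one.

Definition Sset := gT * T -> Prop.

Definition ext_subgroup (P : {set gT}) (E : Sset) : Prop :=
  [/\ forall x, E x -> x.1 \in P,
      E ext_one,
      forall x y, E x -> E y -> E (ext_mul x y)
    & forall x, E x -> E (ext_inv x)].

Definition ext_elem_abelian (p : nat) (P : {set gT}) (E : Sset) : Prop :=
  [/\ ext_subgroup P E,
      forall x y, E x -> E y -> ext_mul x y = ext_mul y x
    & forall x, E x -> ext_exp x p = ext_one].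

(* E is a complement to T = {(1,t)} in Lbar = epsilon^{-1}(L) *)
Definition complement_T (P L : {set gT}) (E : Sset) : Prop :=
  [/\ ext_subgroup P E,
      forall x, E x -> x.1 \in L,
      forall t, E (1%g, t) -> t = 0
    & forall l, l \in L -> exists t, E (l, t)].

Definition in_calL (p : nat) (P L : {set gT}) : Prop :=
  [/\ L \subset P, (p.-abelem L)%g & in_B2 L].

Definition C_L (L : {set gT}) (tL : gT -> T) (d : gT -> T) : Sset :=
  fun x => x.1 \in L /\ x.2 = tL x.1 + d x.1.

End Ext.

From mathcomp Require Import all_boot all_order all_algebra all_fingroup all_solvable.
From mathcomp Require Import boolp.
From mathcomp Require classical_sets.
Set Implicit Arguments. Unset Strict Implicit. Unset Printing Implicit Defensive.
Import GRing.Theory.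
Local Open Scope ring_scope.

(* An elementary abelian subgroup E of S = Ext(rho) meets T trivially, since T is
   torsion-free; hence E is the graph of a map s on its image L = epsilon(E), and
   closure of E under multiplication says exactly that
   s(lm) = s(l)^m + s(m) + rho(l,m), i.e. that rho restricted to L is the
   coboundary of s, so L lies in calL.  Two such maps s, s' on L differ by a
   1-cocycle, so E = C_L(s - t_L).  Conversely every C_L(delta) is the graph of
   such a map over the elementary abelian group L, hence an elementary abelian
   subgroup, and L is recovered from C_L(delta) as its image. *)

Section ExtGraphs.

Variables (gT : finGroupType) (P : {group gT}) (T : zmodType).
Variables (act : T -> gT -> T) (rho : gT -> gT -> T).
Hypothesis actP : is_right_module act P.

Lemma act0 g : g \in P -> act 0 g = 0.
Proof.
by have [_ _ actD] := actP => Pg; apply: (addrI (act 0 g)); rewrite -actD ?addr0.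
Qed.

Lemma actB g s t : g \in P -> act (s - t) g = act s g - act t g.
Proof.
have [_ _ actD] := actP => Pg; apply: (addIr (act t g)).
by rewrite -actD // !subrK.
Qed.

Lemma act_inj g s t : g \in P -> act s g = act t g -> s = t.
Proof.
have [act1 actM _] := actP => Pg sgtg.
by rewrite -[s]act1 -[t]act1 -(mulgV g) !actM ?groupV // sgtg.
Qed.

Lemma ext_exp_fst x n : (ext_exp act rho x n).1 = (x.1 ^+ n)%g.
Proof. by elim: n => //= n IHn; rewrite IHn expgS. Qed.

Lemma ext_exp_in (E : Sset gT T) x n :
  ext_subgroup act rho P E -> E x -> E (ext_exp act rho x n).
Proof. by case=> _ E1 EM _ Ex; elim: n => //= n IHn; apply: EM. Qed.

Lemma ext_expT t n : rho 1%g 1%g = 0 -> ext_exp act rho (1%g, t) n = (1%g, t *+ n).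
Proof.
have [act1 _ _] := actP => rho11; elim: n => //= n ->.
by rewrite /ext_mul /= mulg1 act1 rho11 addr0 mulrS.
Qed.

Lemma ext_mul_inv_fibre g s t : g \in P ->
  ext_mul act rho (g, s) (ext_inv act rho (g, t)) = (1%g, act (s - t) g^-1%g).
Proof.
move=> Pg; rewrite /ext_mul /ext_inv /= mulgV actB ?groupV //.
by rewrite addrA subrK.
Qed.

(* [s] is a section of Ext(rho) over [L]: l |-> (l, s l) is multiplicative. *)
Definition ext_section (L : {set gT}) (s : gT -> T) : Prop :=
  s 1%g = 0 /\ forall l m, l \in L -> m \in L ->
    s (l * m)%g = act (s l) m + s m + rho l m.

Definition ext_graph (L : {set gT}) (s : gT -> T) : Sset gT T :=
  fun x => x.1 \in L /\ x.2 = s x.1.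

Lemma C_L_graph (L : {set gT}) (s d : gT -> T) :
  C_L L s d = ext_graph L (fun g => s g + d g).
Proof. by apply/funext => x; apply/propext. Qed.

Lemma ext_graph_eq (L : {set gT}) s x y :
  ext_graph L s x -> ext_graph L s y -> x.1 = y.1 -> x = y.
Proof. by case: x y => [g a] [h b] [/= _ ->] [/= _ ->] /= ->. Qed.

Lemma complement_section (L : {group gT}) s :
  complement_T act rho P L (C_L L s (fun _ => 0)) -> ext_section L s.
Proof.
case=> [[_ _ CM _] _ CT _]; split; first by apply: CT; rewrite /C_L group1 addr0.
have C_Ls k : k \in L -> C_L L s (fun _ => 0) (k, s k) by split; rewrite //= addr0.
move=> l m Ll Lm.
by have [_ /= ->] := CM _ _ (C_Ls l Ll) (C_Ls m Lm); rewrite !addr0.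
Qed.

Lemma ext_section_inv (L : {group gT}) s l : l \in L -> ext_section L s ->
  s l^-1%g = - act (s l) l^-1%g - rho l l^-1%g.
Proof.
move=> Ll [s1 sM]; have := sM _ _ Ll (groupVr Ll); rewrite mulgV s1 => s1E.
apply: (addIr (rho l l^-1%g)); apply: (addrI (act (s l) l^-1%g)).
by rewrite subrK subrr addrA -s1E.
Qed.

Lemma ext_section_B2 (L : {set gT}) s : ext_section L s -> in_B2 act rho L.
Proof.
move=> [s1 sM]; exists s; split=> // l m Ll Lm.
by rewrite sM // [act _ _ + _]addrC (addrAC (s m)) addrK (addrC (s m)) addrK.
Qed.

Lemma ext_sectionD (L : {set gT}) s d : L \subset P ->
  ext_section L s -> is_Z1 act L d -> ext_section L (fun g => s g + d g).
Proof.
have [_ _ actD] := actP => /subsetP sLP [s1 sM] [d1 dM].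
split=> [|l m Ll Lm]; first by rewrite s1 d1 addr0.
by rewrite sM // dM // actD ?sLP // addrAC addrACA.
Qed.

Lemma ext_section_sub_Z1 (L : {set gT}) s s' : L \subset P ->
  ext_section L s -> ext_section L s' -> is_Z1 act L (fun g => s' g - s g).
Proof.
move=> /subsetP sLP [s1 sM] [s1' sM'].
split=> [|l m Ll Lm]; first by rewrite s1 s1' subrr.
by rewrite sM // sM' // actB ?sLP // opprD addrACA subrr addr0 opprD addrACA.
Qed.

Lemma ext_graph_subgroup (L : {group gT}) s : L \subset P -> ext_section L s ->
  ext_subgroup act rho P (ext_graph L s).
Proof.
move=> /subsetP sLP sec; have [s1 sM] := sec; split.
- by move=> x [/sLP].
- by rewrite /ext_graph /= group1 s1.
- by move=> [l a] [m b] [/= Ll ->] [/= Lm ->]; split; [apply: groupM | rewrite /= sM].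
by move=> [l a] [/= Ll ->]; split; [apply: groupVr | rewrite /= (ext_section_inv Ll sec)].
Qed.

Lemma ext_graph_elem_abelian p (L : {group gT}) s :
  prime p -> L \subset P -> (p.-abelem L)%g -> ext_section L s ->
  ext_elem_abelian act rho p P (ext_graph L s).
Proof.
move=> p_pr sLP /(abelemP p_pr)[/centsP cLL Lp] sec.
have Esub := ext_graph_subgroup sLP sec; have [_ E1 EM _] := Esub.
split=> // [x y Ex Ey | x Ex].
  apply: ext_graph_eq (EM _ _ Ex Ey) (EM _ _ Ey Ex) _.
  by rewrite /= cLL //; [case: Ex | case: Ey].
apply: ext_graph_eq (ext_exp_in _ Esub Ex) E1 _.
by rewrite ext_exp_fst Lp //; case: Ex.
Qed.

Lemma C_L_subset (A B : {set gT}) (sA sB dA dB : gT -> T) :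
  C_L A sA dA = C_L B sB dB -> A \subset B.
Proof.
move=> eAB; apply/subsetP => g Ag.
by have [] : C_L B sB dB (g, sA g + dA g) by rewrite -eAB.
Qed.

Lemma C_L_set_inj (A B : {set gT}) (sA sB dA dB : gT -> T) :
  C_L A sA dA = C_L B sB dB -> A = B.
Proof.
by move=> eAB; apply/eqP; rewrite eqEsubset (C_L_subset eAB) (C_L_subset (esym eAB)).
Qed.

Section ElemAbelianSubgroup.

Variables (p : nat) (E : Sset gT T).
Hypothesis p_prime : prime p.
Hypothesis T_torsion_free : forall (t : T) (n : nat), (0 < n)%N -> t *+ n = 0 -> t = 0.
Hypothesis rhoP : is_Z2 act rho P.
Hypothesis EP : ext_elem_abelian act rho p P E.

Lemma elem_abelian_fibre_uniq g s t : E (g, s) -> E (g, t) -> s = t.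
Proof.
have [[EP1 _ EM EV] _ Ep] := EP; have [rho1 _ _] := rhoP.
move=> Es Et; have Pg : g \in P := EP1 _ Es.
have := Ep _ (EM _ _ Es (EV _ Et)).
rewrite ext_mul_inv_fibre // ext_expT ?rho1 // => -[/T_torsion_free st0].
apply/eqP; rewrite -subr_eq0; apply/eqP/(act_inj (groupVr Pg)).
by rewrite st0 ?prime_gt0 ?act0 ?groupV.
Qed.

Definition ext_image : {set gT} := [set g | `[< exists t, E (g, t) >]].

Lemma ext_imageP g : reflect (exists t, E (g, t)) (g \in ext_image).
Proof. by rewrite inE; apply: asboolP. Qed.

Fact ext_image_group_set : group_set ext_image.
Proof.
have [[_ E1 EM _] _ _] := EP; apply/group_setP; split; first by apply/ext_imageP; exists 0.
move=> g h /ext_imageP[s Es] /ext_imageP[t Et]; apply/ext_imageP.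
by eexists; apply: EM Es Et.
Qed.

Definition ext_image_group : {group gT} := Group ext_image_group_set.

Definition ext_lift (g : gT) : T := classical_sets.xget 0 (fun t => E (g, t)).

Lemma ext_liftP g : g \in ext_image -> E (g, ext_lift g).
Proof. by move/ext_imageP; apply: classical_sets.xgetPex. Qed.

Lemma ext_lift_fibre g t : E (g, t) -> ext_lift g = t.
Proof.
move=> Et; apply: (classical_sets.xget_unique _ Et) => s Es.
exact: elem_abelian_fibre_uniq Es Et.
Qed.

Lemma ext_image_graph : E = ext_graph ext_image_group ext_lift.
Proof.
apply/funext => -[g t]; apply/propext; split=> [Et | [/= /ext_liftP Eg ->] //].
by split; [apply/ext_imageP; exists t | rewrite /= (ext_lift_fibre Et)].
Qed.

Lemma ext_image_sub : ext_image_group \subset P.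
Proof. by have [[EP1 _ _ _] _ _] := EP; apply/subsetP => g /ext_liftP/EP1. Qed.

Lemma ext_lift_section : ext_section ext_image_group ext_lift.
Proof.
have [[_ E1 EM _] _ _] := EP; split; first exact: ext_lift_fibre.
by move=> l m /ext_liftP El /ext_liftP Em; apply: ext_lift_fibre (EM _ _ El Em).
Qed.

Lemma ext_image_abelem : (p.-abelem ext_image_group)%g.
Proof.
have [_ EC Ep] := EP; apply/(abelemP p_prime); split.
  by apply/centsP => g /ext_liftP Eg h /ext_liftP Eh; have /(congr1 fst) := EC _ _ Eg Eh.
by move=> g /ext_liftP/Ep/(congr1 fst); rewrite ext_exp_fst.
Qed.

Lemma ext_image_calL : in_calL act rho p P ext_image_group.
Proof.
split; [exact: ext_image_sub | exact: ext_image_abelem |].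
exact: ext_section_B2 ext_lift_section.
Qed.

End ElemAbelianSubgroup.

End ExtGraphs.

Theorem theorem3p1
  (p : nat) (gT : finGroupType) (P : {group gT}) (T : zmodType)
  (act : T -> gT -> T) (rho : gT -> gT -> T)
  (tL : {group gT} -> gT -> T) :
  prime p -> (p.-group P)%g ->
  (* T is torsion-free (as Z_p^d is) *)
  (forall (t : T) (n : nat), (0 < n)%N -> t *+ n = 0 -> t = 0) ->
  is_right_module act P ->
  is_Z2 act rho P ->
  (* for each L in calL, C_L = {(l, t_L(l))} is a fixed complement to T in Lbar *)
  (forall L : {group gT}, in_calL act rho p P L ->
     complement_T act rho P L (C_L L (tL L) (fun _ => 0))) ->
  (* objects of A_p(S) are exactly the C_L(delta), L in calL, delta in Z^1(L,T) *)
  (forall E : Sset gT T,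
     ext_elem_abelian act rho p P E <->
     exists L : {group gT}, in_calL act rho p P L /\
       exists d : gT -> T, is_Z1 act L d /\ E = C_L L (tL L) d)
  /\
  (* and the union of the sets calC(L) is disjoint *)
  (forall (L L' : {group gT}) (d d' : gT -> T),
     in_calL act rho p P L -> in_calL act rho p P L' ->
     is_Z1 act L d -> is_Z1 act L' d' ->
     C_L L (tL L) d = C_L L' (tL L') d' -> L = L').
Proof.
move=> p_pr _ T_tf actP rhoP tLP; split=> [E | L L' d d' _ _ _ _ /C_L_set_inj eLL'].
  split=> [EP | [L [calL [d [Ld ->]]]]].
    pose L := ext_image_group EP.
    have tLsec := complement_section (tLP L (ext_image_calL actP p_pr T_tf rhoP EP)).
    exists L; split; first exact: ext_image_calL.
    exists (fun g => ext_lift E g - tL L g); split.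
      have liftsec := ext_lift_section actP p_pr T_tf rhoP EP.
      exact: ext_section_sub_Z1 (ext_image_sub EP) tLsec liftsec.
    rewrite C_L_graph {1}(ext_image_graph actP p_pr T_tf rhoP EP).
    by congr ext_graph; apply/funext => g; rewrite addrC subrK.
  have [sLP abL _] := calL; have tLsec := complement_section (tLP L calL).
  have secD := ext_sectionD actP sLP tLsec Ld.
  by rewrite C_L_graph; apply: ext_graph_elem_abelian p_pr sLP abL secD.
exact: val_inj.
Qed.
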